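(* Let $X=X_F\uplus X_H$ be a set of $n\ge1$ clocks, $M\in\mathbb{N}$, and let $v_1,v_2$ be valuations with $v_1\sim_M v_2$. Let $x,y$ be clocks such that $-M\le v_1(x),v_1(y)\le M$. Then $\lfloor v_1(x)\rfloor=\lfloor v_2(x)\rfloor$, $\{v_1(x)\}=0$ iff $\{v_2(x)\}=0$, and $\{v_1(x)\}\le\{v_1(y)\}$ iff $\{v_2(x)\}\le\{v_2(y)\}$.
   Context: $X_F$ are future clocks, $X_H$ history clocks. $\overline{\mathbb{R}}=\mathbb{R}\cup\{\pm\infty\}$ with $(+\infty)+\alpha=+\infty$, $(-\infty)+\beta=-\infty$ for $\beta\ne+\infty$, $-(\pm\infty)=\mp\infty$. A valuation $v:X\cup\{0\}\to\overline{\mathbb{R}}$ has $v(0)=0$, $v(x)\in\mathbb{R}_{\ge0}\cup\{+\infty\}$ for $x\in X_H$, $v(x)\in\mathbb{R}_{\le0}\cup\{-\infty\}$ for $x\in X_F$. For $\alpha\in\mathbb{R}$, $\{\alpha\}=\alpha-\lfloor\alpha\rfloor$. For $K\in\mathbb{N}$ and $\alpha,\beta\in\overline{\mathbb{R}}$, $\alpha\sim_K\beta$ iff for all ${\triangleleft}\in\{<,\le\}$ and all $c\in\{-\infty,+\infty\}$ or $c\in\mathbb{Z}$ with $|c|\le K$: $\alpha\triangleleft c\iff\beta\triangleleft c$. For valuations, $v_1\sim_M v_2$ iff (i) $v_1(x)\sim_{nM}v_2(x)$ for all $x\in X$, and (ii) $v_1(x)-v_1(y)\sim_{(n+1)M}v_2(x)-v_2(y)$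 for all $x,y\in X$, where $n=|X|$. *)

From mathcomp Require Import all_boot all_order all_algebra.
From mathcomp Require Import reals.
Set Implicit Arguments. Unset Strict Implicit. Unset Printing Implicit Defensive.
Import Order.TTheory GRing.Theory Num.Theory.
Local Open Scope ring_scope.

Inductive ext (R : realType) : Type := Fin of R | PInf | NInf.
Arguments PInf {R}. Arguments NInf {R}.

Section Ext.
Variable R : realType.

Definition eadd (a b : ext R) : ext R :=
  match a, b with
  | PInf, _ => PInf
  | _, PInf => PInf
  | NInf, _ => NInf
  | _, NInf => NInf
  | Fin x, Fin y => Fin (x + y)
  end.

Definition eopp (a : ext R) : ext R :=
  match a with Fin x => Fin (- x) | PInf => NInf | NInf => PInf end.

Definition esub (a b : ext R) : ext R := eadd a (eopp b).

Definition ele (a b : ext R) : Prop :=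
  match a, b with
  | NInf, _ => True
  | _, PInf => True
  | Fin x, Fin y => x <= y
  | _, _ => False
  end.

Definition elt (a b : ext R) : Prop :=
  match a, b with
  | NInf, NInf => False
  | NInf, _ => True
  | PInf, _ => False
  | Fin _, PInf => True
  | Fin x, Fin y => x < y
  | Fin _, NInf => False
  end.

(* real value of a finite extended real (0 on infinities; only used on finite values) *)
Definition fin (a : ext R) : R := match a with Fin x => x | _ => 0 end.

Definition fracpart (a : R) : R := a - (Num.floor a)%:~R.

Definition bound_const (K : nat) (c : ext R) : Prop :=
  c = NInf \/ c = PInf \/ exists z : int, (`|z| <= K%:Z) /\ c = Fin (z%:~R).

Definition esim (K : nat) (a b : ext R) : Prop :=
  forall c, bound_const K c ->
    (elt a c <-> elt b c) /\ (ele a c <-> ele b c).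

(* Clocks: a finite type X, partitioned into future clocks (XF x) and history
   clocks (~~ XF x).  The zero clock is implicit (v(0) = 0). *)
Definition valuation (X : finType) (XF : pred X) (v : X -> ext R) : Prop :=
  forall x, if XF x then ele (v x) (Fin 0) /\ v x <> PInf
            else ele (Fin 0) (v x) /\ v x <> NInf.

Definition vsim (X : finType) (M : nat) (v1 v2 : X -> ext R) : Prop :=
  (forall x, esim (#|X| * M) (v1 x) (v2 x)) /\
  (forall x y, esim (#|X|.+1 * M) (esub (v1 x) (v1 y)) (esub (v2 x) (v2 y))).
End Ext.

From mathcomp Require Import all_boot all_order all_algebra.
From mathcomp Require Import reals.
From mathcomp Require Import zify lra.
Set Implicit Arguments. Unset Strict Implicit. Unset Printing Implicit Defensive.
Import Order.TTheory GRing.Theory Num.Theory.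
Local Open Scope ring_scope.

(* If -M <= a <= M then k = floor a satisfies |k| <= M, so the constraints
   k <= a < k + 1 are among those preserved by ~_M, which forces floor b = k;
   likewise {a} = 0 iff a <= k.  Since {a} <= {a'} iff a - a' <= k - k', with
   |k - k'| <= 2M <= (n+1)M, the comparison of fractional parts is a constraint
   on the clock difference, preserved by the second clause of ~_M. *)

Section Esim.
Variable R : realType.
Implicit Types (a b : R) (K : nat).

Lemma esim_Fin K a (w : ext R) : esim K (Fin a) w -> exists b, w = Fin b.
Proof.
move=> E; have [[+ _] _] := E PInf (or_intror (or_introl erefl)).
have [_ [_ +]] := E NInf (or_introl erefl).
by case: w {E} => [b _ _|_ /(_ I)//|/(_ I)//]; exists b.
Qed.

Lemma esim_le K K' (u w : ext R) : (K <= K')%N -> esim K' u w -> esim K u w.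
Proof.
move=> KK' E c [->|[->|[z [hz ->]]]]; apply: E; [left|right; left|right; right]=> //.
by exists z; split=> //; apply: le_trans hz _; rewrite lez_nat.
Qed.

Lemma esim_le_int K a b (z : int) : esim K (Fin a) (Fin b) -> `|z| <= K%:Z ->
  (a <= z%:~R <-> b <= z%:~R) /\ (z%:~R <= a <-> z%:~R <= b).
Proof.
move=> E hz.
have [lt_ab le_ab] := E (Fin z%:~R) (or_intror (or_intror (ex_intro _ z (conj hz erefl)))).
split=> //; rewrite !leNgt.
by split=> /negP nlt; apply/negP=> lt; apply: nlt; apply lt_ab.
Qed.

Lemma norm_floor_le K a : - K%:R <= a -> a <= K%:R -> `|Num.floor a| <= K%:Z.
Proof.
move=> geK leK; rewrite ler_norml; apply/andP; split.
  by rewrite floor_ge_int rmorphN.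
have : Num.floor a < K%:Z + 1 by rewrite floor_lt_int rmorphD /=; lra.
by rewrite ltzD1.
Qed.

Lemma esim_floor K a b : - K%:R <= a -> a <= K%:R -> esim K (Fin a) (Fin b) ->
  Num.floor a = Num.floor b.
Proof.
move=> geK leK E; have hk := norm_floor_le geK leK.
set k := Num.floor a in hk *.
apply/esym/floor_def/andP; split.
  by apply/(proj2 (esim_le_int E hk))/floor_le.
have [ltkK|gekK] := ltP k K%:Z.
  have hk1 : `|k + 1| <= K%:Z by move: hk; rewrite !ler_norml => /andP[? ?]; lia.
  rewrite ltNge; apply/negP=> /(proj2 (proj2 (esim_le_int E hk1))).
  by apply/negP; rewrite -ltNge floorD1_gt.
(* k + 1 = K + 1 is not an admissible constant; use the bound a <= K instead. *)
have -> : k = K%:Z by move: hk; rewrite ler_norml => /andP[_ ?]; lia.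
have /(proj1 (proj1 (esim_le_int (z := K%:Z) E (lexx _)))) := leK.
by rewrite rmorphD /=; lra.
Qed.

End Esim.

Section Fracpart.
Variable R : realType.
Implicit Types a : R.

Lemma fracpart_eq0 a : fracpart a = 0 <-> a <= (Num.floor a)%:~R.
Proof. by have := floor_le a; rewrite /fracpart; split=> ?; lra. Qed.

Lemma fracpart_le a a' :
  fracpart a <= fracpart a' <-> a - a' <= (Num.floor a - Num.floor a')%:~R.
Proof. by rewrite /fracpart rmorphB /=; split=> ?; lra. Qed.

End Fracpart.

Theorem lemma9 (R : realType) (X : finType) (XF : pred X) (M : nat)
  (v1 v2 : X -> ext R) (x y : X) :
  (1 <= #|X|)%N ->
  valuation XF v1 -> valuation XF v2 ->
  vsim M v1 v2 ->
  ele (Fin (- (M%:R : R))) (v1 x) -> ele (v1 x) (Fin (M%:R : R)) ->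
  ele (Fin (- (M%:R : R))) (v1 y) -> ele (v1 y) (Fin (M%:R : R)) ->
  [/\ Num.floor (fin (v1 x)) = Num.floor (fin (v2 x)),
      (fracpart (fin (v1 x)) = 0 <-> fracpart (fin (v2 x)) = 0) &
      (fracpart (fin (v1 x)) <= fracpart (fin (v1 y))
         <-> fracpart (fin (v2 x)) <= fracpart (fin (v2 y)))].
Proof.
(* The bounds on v1 x and v1 y already make them finite. *)
move=> n_ge1 _ _ [sim_val sim_diff].
case: (v1 x) (sim_val x) (sim_diff x y) => [a||] // sim_x + gex lex.
case: (v1 y) (sim_val y) => [a'||] // sim_y sim_xy gey ley.
have [b v2x] := esim_Fin sim_x; have [b' v2y] := esim_Fin sim_y.
rewrite v2x v2y /= in sim_x sim_y sim_xy *.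
have le_M_nM : (M <= #|X| * M)%N by rewrite leq_pmull.
have {}sim_x := esim_le le_M_nM sim_x; have {}sim_y := esim_le le_M_nM sim_y.
have floor_x := esim_floor gex lex sim_x; have floor_y := esim_floor gey ley sim_y.
have norm_kx := norm_floor_le gex lex; have norm_ky := norm_floor_le gey ley.
split=> //.
  by rewrite !fracpart_eq0 -floor_x; exact: (proj1 (esim_le_int sim_x norm_kx)).
have norm_kxy : `|Num.floor a - Num.floor a'| <= (#|X|.+1 * M)%N%:Z.
  by move: norm_kx norm_ky; rewrite !ler_norml => /andP[? ?] /andP[? ?]; nia.
by rewrite !fracpart_le -floor_x -floor_y; exact: (proj1 (esim_le_int sim_xy norm_kxy)).
Qed.
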